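(* Let $P(z,\bar z)=\sum_{j+k\leq n}\alpha_{j,k} z^j\bar z^k$ be an irreducible polyanalytic polynomial such that $|\alpha_{j,k}|\neq|\alpha_{k,j}|$ for some indices $j,k$. Then $P$ has only finitely many zeros in $\mathbb{C}$.
   Context: A polyanalytic polynomial is a function $\mathbb{C}\to\mathbb{C}$ of the form $P(z,\bar z)=\sum_{j+k\le n}\alpha_{j,k} z^j \bar z^{k}$ with complex coefficients (a polynomial in $z$ and $\bar z$); two such polynomials are equal iff all coefficients agree. Its degree is the largest $j+k$ with $\alpha_{j,k}\neq 0$. $P$ is called reducible if $P=P_1P_2$ for polyanalytic polynomials $P_1,P_2$ with $\deg(P_1),\deg(P_2)\geq 1$, and irreducible otherwise. A zero of $P$ is a point $z\in\mathbb{C}$ with $P(z,\bar z)=0$. *)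

From HB Require Import structures.
From mathcomp Require Import all_boot all_order all_algebra.
From mathcomp Require Import reals complex.
Set Implicit Arguments. Unset Strict Implicit. Unset Printing Implicit Defensive.
Import Order.TTheory GRing.Theory Num.Theory.
Local Open Scope ring_scope.

(* A polyanalytic polynomial P(z, zbar) = sum alpha_{j,k} z^j zbar^k is
   represented as p : {poly {poly C}}, with alpha_{j,k} = p`_j`_k
   (outer variable <-> z, inner variable <-> zbar). *)
Definition polyan (R : realType) := {poly {poly R[i]}}.

Definition coefan (R : realType) (p : polyan R) (j k : nat) : R[i] := p`_j`_k.

Definition degan (R : realType) (p : polyan R) : nat :=
  (\max_(j < size p) \max_(k < size (p`_j)%R)
     (if coefan p j k != 0%R then j + k else 0))%N.

Definition evalan (R : realType) (p : polyan R) (z : R[i]) : R[i] :=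
  \sum_(j < size p) \sum_(k < size p`_j) coefan p j k * z ^+ j * (z^*) ^+ k.

Definition reducible_an (R : realType) (p : polyan R) : Prop :=
  exists p1 p2 : polyan R,
    p = p1 * p2 /\ (1 <= degan p1)%N /\ (1 <= degan p2)%N.

Definition irreducible_an (R : realType) (p : polyan R) : Prop :=
  ~ reducible_an p.

From HB Require Import structures.
From mathcomp Require Import all_boot all_order all_algebra.
From mathcomp Require Import reals complex ring.
Import Order.TTheory GRing.Theory Num.Theory.
Set Implicit Arguments. Unset Strict Implicit. Unset Printing Implicit Defensive.
Local Open Scope ring_scope.

(* Regard P as a polynomial in z over C[zbar] and let P* = star P have
   coefficients conj(alpha_{k,j}), so that P*(z) = conj(P(z)) and every zero of
   P is a zero of P*.  If the resultant of P and P* in z is nonzero, it is a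
   nonzero polynomial in zbar vanishing at zbar for every zero z, so there are
   finitely many zeros.  Otherwise P and P* share a factor of positive degree in
   z; Gauss's lemma over C[zbar] and the irreducibility of P then give
   P* = P T, applying star once more gives T T* = 1, so T is a constant of
   modulus one and |alpha_{j,k}| = |alpha_{k,j}| for all j, k. *)

Section ContentSplitting.
Variable C : closedFieldType.
Implicit Types (c : {poly C}) (f h m : {poly {poly C}}).

Lemma XsubC_factor_coefs (a : C) f : map_poly (horner_eval a) f = 0 ->
  f = ('X - a%:P)%:P * map_poly (fun x => x %/ ('X - a%:P)) f.
Proof.
move=> fa0; apply/polyP => i; rewrite coefCM coef_map_id0 ?div0p // mulrC divpK //.
rewrite dvdp_XsubCl; apply/rootP.
by have := congr1 (fun g : {poly C} => g`_i) fa0; rewrite coef_map coef0.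
Qed.

(* Gauss's lemma over C[w], by induction on the number of linear factors of c. *)
Lemma polyC_mul_split c m f h : c != 0 -> c%:P * m = f * h ->
  exists c1 c2 f' h', [/\ f = c1%:P * f', h = c2%:P * h' & m = f' * h'].
Proof.
have [n] := ubnP (size c); elim: n => // n IHn in c m f h *; rewrite ltnS => le_c_n c0 e.
have [/eqP/size_poly1P[k k0 ck] | /closed_rootP[a ca]] := eqVneq (size c) 1.
  exists 1, c, f, ((k^-1)%:P%:P * h); split; first by rewrite mul1r.
    by rewrite ck mulrA -!polyCM mulfV // mul1r.
  by rewrite mulrCA -e ck mulrA -!polyCM mulVf // mul1r.
have [c' def_c] := factor_theorem _ _ ca; rewrite {}def_c in c0 le_c_n e.
have c'0 : c' != 0 by apply: contraNneq c0 => ->; rewrite mul0r.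
have lt_c'_n : (size c' < n)%N.
  by move: le_c_n; rewrite size_mul ?polyXsubC_eq0 // size_XsubC addn2.
have Xa0 : ('X - a%:P)%:P != 0 :> {poly {poly C}} by rewrite polyC_eq0 polyXsubC_eq0.
wlog fa0 : f h e / map_poly (horner_eval a) f = 0.
  move=> wlog_f; have := congr1 (map_poly (horner_eval a)) e.
  rewrite [RHS]rmorphM rmorphM /= map_polyC /= /horner_eval hornerM hornerXsubC.
  rewrite subrr mulr0 mul0r => /esym/eqP; rewrite mulf_eq0 => /orP[/eqP|/eqP] ha0.
    exact: wlog_f.
  have [c2 [c1 [h' [f' [eh ef em]]]]] := wlog_f h f (etrans e (mulrC f h)) ha0.
  by exists c1, c2, f', h'; split; rewrite // em mulrC.
move/XsubC_factor_coefs: fa0; set f1 := map_poly _ f => ef.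
have e' : c'%:P * m = f1 * h.
  by apply: (mulfI Xa0); rewrite mulrA -polyCM [_ * c']mulrC e ef mulrA.
have [c1 [c2 [f' [h' [ef1 eh em]]]]] := IHn _ _ _ _ lt_c'_n c'0 e'.
by exists (('X - a%:P) * c1), c2, f', h'; rewrite ef ef1 polyCM mulrA.
Qed.

End ContentSplitting.

Lemma conj_roots_finite (C : numClosedFieldType) (P : C -> Prop) (c : {poly C}) :
  c != 0 -> (forall z, P z -> root c z^*) -> exists s : seq C, forall z, P z -> z \in s.
Proof.
move=> c0 Pc; have [rs crs] := closed_field_poly_normal c.
exists (map Num.conj rs) => z /Pc; rewrite crs rootZ ?lead_coef_eq0 // root_prod_XsubC.
by move=> rs_z; rewrite -(conjCK z) map_f.
Qed.

Section PolyAnalytic.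
Variable R : realType.
Implicit Types (p q t f a b : polyan R) (z : R[i]).

Lemma degan_leqP f n :
  reflect (forall j k, f`_j`_k != 0 -> (j + k <= n)%N) (degan f <= n)%N.
Proof.
apply: (iffP (@bigmax_leqP _ xpredT n _)) => [fn j k fjk | fn j _].
  have lt_j : (j < size f)%N.
    by rewrite ltnNge; apply: contra fjk => /(nth_default 0) ->; rewrite coef0.
  have lt_k : (k < size (f`_j)%R)%N.
    by rewrite ltnNge; apply: contra fjk => /(nth_default 0) ->.
  by have /bigmax_leqP/(_ (Ordinal lt_k) isT) := fn (Ordinal lt_j) isT; rewrite /coefan fjk.
by apply/bigmax_leqP => k _; rewrite /coefan; case: ifP => // /fn.
Qed.

Lemma degan_eq0 f : degan f = 0%N -> f = (f`_0`_0)%:P%:P.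
Proof.
move=> /eqP; rewrite -leqn0 => /degan_leqP f0.
apply/polyP => j; apply/polyP => k.
have [fjk | /f0] := eqVneq f`_j`_k 0; last first.
  by rewrite leqn0 addn_eq0 => /andP[/eqP-> /eqP->]; rewrite !coefC.
by move: fjk; case: j k => [|j] [|k]; rewrite !coefC //= => ->.
Qed.

Lemma irreducible_an_factor p a b : irreducible_an p -> p = a * b ->
  a = (a`_0`_0)%:P%:P \/ b = (b`_0`_0)%:P%:P.
Proof.
move=> p_irr pab; have [/degan_eq0|a_gt0] := posnP (degan a); first by left.
have [/degan_eq0|b_gt0] := posnP (degan b); first by right.
by case: p_irr; exists a, b.
Qed.

Definition star (f : polyan R) : polyan R :=
  swapXY (map_poly (map_poly Num.conj) f).

Lemma coef_star f j k : (star f)`_j`_k = (f`_k`_j)^*.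
Proof. by rewrite coef_swapXY !coef_map. Qed.

Lemma starM f g : star (f * g) = star f * star g.
Proof. by rewrite /star !rmorphM. Qed.

Lemma starK : involutive star.
Proof. by move=> f; apply/polyP => j; apply/polyP => k; rewrite !coef_star conjCK. Qed.

Lemma evalanE p z : evalan p z = p.[z, z^*].
Proof.
rewrite /evalan (horner_coef p) horner_sum; apply: eq_bigr => j _.
rewrite hornerM -rmorphXn hornerC horner_coef mulr_suml; apply: eq_bigr => k _.
by rewrite /coefan mulrAC.
Qed.

Lemma horner2_star f z : (star f).[z, z^*] = (f.[z, z^*])^*.
Proof.
rewrite /star horner2_swapXY -(map_polyC Num.conj) horner_map.
by rewrite -[in RHS]horner_map /= (conjCK z).
Qed.

Lemma size_le1_zeros f : f != 0 -> (size f <= 1)%N ->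
  exists2 c : {poly R[i]}, c != 0 & forall z, f.[z, z^*] = 0 -> root c z^*.
Proof.
move=> f0 /size1_polyC f_const; exists f`_0 => [|z].
  by apply: contraNneq f0 => f00; rewrite f_const f00.
by rewrite {1}f_const hornerC => /rootP.
Qed.

Lemma starC (c : R[i]) : star c%:P%:P = (c^*)%:P%:P.
Proof. by rewrite /star map_polyC /= map_polyC swapXY_polyC map_polyC. Qed.

Lemma star_eq_mul_norm_coef p t j k : p != 0 -> star p = p * t ->
  `|p`_j`_k| = `|p`_k`_j|.
Proof.
move=> p0 ept.
have t_star_t : t * star t = 1.
  by apply: (mulfI p0); rewrite mulr1 mulrA -ept -starM -ept starK.
have t_unit : t \is a GRing.unit.
  by apply/unitrP; exists (star t); rewrite mulrC t_star_t.
have [l tl] : exists l, t = l%:P%:P.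
  move: t_unit; rewrite poly_unitE => /andP[/eqP/eq_leq/size1_polyC t_C].
  rewrite poly_unitE => /andP[/eqP/eq_leq/size1_polyC t0_C _].
  by exists t`_0`_0; exact: etrans t_C (congr1 polyC t0_C).
subst t.
have norm_l : `|l| = 1.
  move: t_star_t; rewrite starC -!polyCM -polyC1 => /polyC_inj.
  rewrite -polyC1 => /polyC_inj /(congr1 Num.norm).
  by rewrite normrM norm_conjC normr1 => /eqP; rewrite -expr2 sqrp_eq1 // => /eqP.
have := congr1 (fun g : polyan R => g`_k`_j) ept.
by rewrite /= coef_star !coefMC => /(congr1 Num.norm); rewrite norm_conjC normrM norm_l mulr1.
Qed.

Lemma irreducible_an_dvd_polyCM p q t k : irreducible_an p ->
  (1 < size p)%N -> k != 0 -> k%:P * q = p * t -> exists t', q = p * t'.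
Proof.
move=> p_irr p_gt1 k0 /(polyC_mul_split k0) [k1 [_ [p' [t' [ep _ ->]]]]].
have k1_0 : k1 != 0 by apply: contraTneq p_gt1 => k1_0; rewrite ep k1_0 mul0r size_poly0.
have [k1_C | p'_C] := irreducible_an_factor p_irr ep; last first.
  by move: p_gt1; rewrite ep size_Cmul // p'_C size_polyC ltnNge leq_b1.
rewrite coefC /= in k1_C; move/polyC_inj: k1_C; set l := k1`_0 => k1_C.
have l0 : l != 0 by apply: contraNneq k1_0 => l0; rewrite k1_C l0.
exists (l^-1%:P%:P * t'); rewrite ep k1_C mulrACA -!polyCM mulfV //.
by rewrite !polyC1 mul1r.
Qed.

Lemma irreducible_an_gcdp p q : irreducible_an p -> (1 < size p)%N ->
  (1 < size (gcdp p q))%N -> exists t, q = p * t.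
Proof.
move=> p_irr p_gt1 r_gt1; set r := gcdp p q in r_gt1.
have [[c p'] /= c0] := Pdiv.Idomain.dvdpP _ _ (dvdp_gcdl p q).
rewrite -/r -mul_polyC => /(polyC_mul_split c0) [_ [c2 [p'' [r' [_ er ep]]]]].
have c2_0 : c2 != 0 by apply: contraTneq r_gt1 => c2_0; rewrite er c2_0 mul0r size_poly0.
have r'_gt1 : (1 < size r')%N by rewrite -(size_Cmul r' c2_0) -er.
have [p''_C | r'_C] := irreducible_an_factor p_irr ep; last first.
  by move: r'_gt1; rewrite r'_C size_polyC ltnNge leq_b1.
set e := p''`_0`_0 in p''_C.
have e0 : e != 0 by apply: contraTneq p_gt1 => e0; rewrite ep p''_C e0 mul0r size_poly0.
have r'_p : r' = (e^-1)%:P%:P * p.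
  by rewrite ep p''_C mulrA -!polyCM mulVf // !polyC1 mul1r.
have [[k q'] /= k0] := Pdiv.Idomain.dvdpP _ _ (dvdp_gcdr p q).
rewrite -/r -mul_polyC er r'_p => e2.
apply: (irreducible_an_dvd_polyCM p_irr p_gt1 k0 (t := (e^-1)%:P%:P * c2%:P * q')).
by rewrite e2; ring.
Qed.

End PolyAnalytic.

Theorem theorem2p9 (R : realType) (p : polyan R) :
  irreducible_an p ->
  (exists j k : nat, `|coefan p j k| != `|coefan p k j|) ->
  exists s : seq R[i], forall z : R[i], evalan p z = 0 -> z \in s.
Proof.
move=> p_irr [j [k pjk]].
have p0 : p != 0 by apply: contraNneq pjk => ->; rewrite /coefan !coef0.
pose q := star p.
have q0 : q != 0 by apply: contraNneq p0 => q0; rewrite -[p]starK -/q q0 /star !rmorph0.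
have zq z : p.[z, z^*] = 0 -> q.[z, z^*] = 0 by rewrite horner2_star => ->; rewrite conjC0.
suff [c c0 zc] : exists2 c : {poly R[i]}, c != 0 & forall z, p.[z, z^*] = 0 -> root c z^*.
  by have [s zs] := conj_roots_finite c0 zc; exists s => z; rewrite evalanE => /zs.
have [p_le1 | p_gt1] := leqP (size p) 1; first exact: size_le1_zeros.
have [q_le1 | q_gt1] := leqP (size q) 1.
  by have [c c0 zc] := size_le1_zeros q0 q_le1; exists c => // z /zq /zc.
have [/eqP | res0] := eqVneq (resultant p q) 0.
  rewrite resultant_eq0 => /(irreducible_an_gcdp p_irr p_gt1) [t qpt].
  by rewrite /coefan (star_eq_mul_norm_coef j k p0 qpt) eqxx in pjk.
exists (resultant p q) => // z pz; have [[u v] /= _ res_uv] := resultant_in_ideal p_gt1 q_gt1.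
have := congr1 (fun f => f.[z, z^*]) res_uv.
by rewrite /= hornerC !(hornerD, hornerM) pz zq // !mulr0 addr0 => /rootP.
Qed.
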